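(* Let $q\in\mathbb{N}$, $q>1$. For $P\ge2$, $N\ge1$ and integers $n>2$ let \[ \Delta_{P,N}^{(2,3)}(n)=\sum_{\substack{d,v\ge1:\ dv^2=n^2-4\\ p\mid v\Rightarrow p\le P}}\frac1v\sum_{\substack{l\ge1:\\ p\mid l\Rightarrow p\le P}}\frac{\chi_d(l)}{l}\big(e^{-l/N}-1\big), \] where $p$ denotes primes. Then for $P\ge2$ and $x,N\ge1$, \[ \Big(\frac1x\sum_{2<n\le x}\big|\Delta_{P,N}^{(2,3)}(n)\big|^{2q}\Big)^{1/(2q)}\ll N^{-1/2}+\sum_{\substack{l>\sqrt N:\\ p\mid l\Rightarrow p\le P}}\frac1l . \]
   Context: Sums over $d$ run over positive non-square discriminants, i.e. positive integers $d$, not perfect squares, with $d\equiv0,1\pmod4$; $v$ runs over positive integers. For such $d$, $\chi_d:\mathbb{Z}\to\{0,\pm1\}$ is the completely multiplicative function with: for odd primes $p$, $\chi_d(p)=0$ if $p\mid d$, $1$ if $p\nmid d$ and $x^2\equiv d\pmod p$ is solvable, $-1$ if insolvable; $\chi_d(2)=1,-1,0$ according as $d\equiv1\pmod 8$, $d\equiv5\pmod8$, $d\equiv0\pmod4$; $\chi_d(-1)=1$. *)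

From Stdlib Require Import Reals.
From Coquelicot Require Import Coquelicot.
From mathcomp Require Import ssreflect ssrfun ssrbool eqtype ssrnat seq div fintype prime.

Open Scope R_scope.

Definition leRb (a b : R) : bool := if Rle_dec a b then true else false.
Definition ltRb (a b : R) : bool := if Rlt_dec a b then true else false.

Definition smooth (P : R) (l : nat) : bool :=
  (0 < l)%N && all (fun p => leRb (INR p) P) (primes l).

Definition is_disc (d : nat) : bool :=
  [&& (0 < d)%N, ((d %% 4 == 0) || (d %% 4 == 1))%N
    & ~~ [exists i : 'I_d.+1, (i * i == d)%N]].

Definition chi_prime (d p : nat) : R :=
  if p == 2%N then
    (if (d %% 8 == 1)%N then 1 else if (d %% 8 == 5)%N then -1 else 0)
  else if (p %| d)%N then 0
  else if [exists x : 'I_p, ((x * x) %% p == d %% p)%N] then 1 else -1.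

Definition chi (d l : nat) : R :=
  foldr (fun p acc => chi_prime d p ^ logn p l * acc) 1 (primes l).

Definition sumR (s : seq nat) (f : nat -> R) : R :=
  foldr (fun i acc => f i + acc) 0 s.

Definition inner_sum (P N : R) (d : nat) : R :=
  Series (fun l => if smooth P l then chi d l / INR l * (exp (- INR l / N) - 1) else 0).

(* Delta23^{(2,3)}_{P,N}(n): sum over d, v >= 1 with d v^2 = n^2 - 4, d a positive
   non-square discriminant, v P-smooth; v ranges in [1, n^2] (v^2 <= n^2 - 4). *)
Definition Delta23 (P N : R) (n : nat) : R :=
  sumR (iota 1 (n * n))
    (fun v => if [&& (v * v %| n * n - 4)%N, is_disc ((n * n - 4) %/ (v * v))%N
                    & smooth P v]
              then / INR v * inner_sum P N ((n * n - 4) %/ (v * v))%N else 0).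

Definition sum_n_le (x : R) (f : nat -> R) : R :=
  sumR (iota 3 (Z.to_nat (up x))) (fun n => if leRb (INR n) x then f n else 0).

Definition rpow (a r : R) : R := if Rle_dec a 0 then 0 else Rpower a r.

Definition tail_sum (P N : R) : R :=
  Series (fun l => if ltRb (sqrt N) (INR l) && smooth P l then / INR l else 0).

(* Put B = 1/sqrt N + tail_sum P N.  As |chi_d| <= 1 and |exp(-y) - 1| <= min(1, y), the terms
   of the inner l-sum with l <= sqrt N contribute at most 1/N each and the others at most the tail,
   so |Delta(n)| <= B F(n) with F(n) = sum_{v^2 | n^2 - 4} 1/v.  (The l-series converge because
   the reciprocals of the k-smooth numbers sum to at most 2^k.)  Since n^2 - 4 = (n - 2)(n + 2)
   with gcd(n - 2, n + 2) | 4, F(n) <= 10 H(4(n - 2)) H(4(n + 2)) where H(M) = sum_{s^2 | M} 1/s.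
   Jensen's inequality with weights s^(-1-1/k) gives H(M)^(k+1) <= (k+1)^k G(M) with
   G(M) = #{s : s^2 | M}, and G has mean value at most 2.  So every moment of F is O(1), and
   the 2q-th moment of |Delta| <= B F is O(B^(2q)). *)

From HB Require Import structures.
From Stdlib Require Import Reals Lra Lia ZArith.
From Coquelicot Require Import Coquelicot.
From mathcomp Require Import ssreflect ssrfun ssrbool eqtype ssrnat seq div prime bigop zify.

Open Scope R_scope.

Lemma Rplus_assoc_law : associative Rplus.
Proof. by move=> x y z; rewrite Rplus_assoc. Qed.

Lemma Rmult_assoc_law : associative Rmult.
Proof. by move=> x y z; rewrite Rmult_assoc. Qed.

HB.instance Definition _ :=
  Monoid.isComLaw.Build R 0 Rplus Rplus_assoc_law Rplus_comm Rplus_0_l.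
HB.instance Definition _ :=
  Monoid.isComLaw.Build R 1 Rmult Rmult_assoc_law Rmult_comm Rmult_1_l.
HB.instance Definition _ := Monoid.isMulLaw.Build R 0 Rmult Rmult_0_l Rmult_0_r.
HB.instance Definition _ :=
  Monoid.isAddLaw.Build R Rmult Rplus Rmult_plus_distr_r Rmult_plus_distr_l.

Notation "\sum_ ( i <- r | P ) F" := (\big[Rplus/0]_(i <- r | P) F) : R_scope.
Notation "\sum_ ( i <- r ) F" := (\big[Rplus/0]_(i <- r) F) : R_scope.

Lemma sumRE (s : seq nat) (f : nat -> R) : sumR s f = \sum_(i <- s) f i.
Proof. by elim: s => [|a s IH] /=; rewrite ?big_nil ?big_cons ?IH. Qed.

Section RealSums.
Variable I : Type.
Implicit Types (r : seq I) (P : pred I) (f g : I -> R).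

Lemma Rle_sum r P f g : (forall i, P i -> f i <= g i) ->
  \sum_(i <- r | P i) f i <= \sum_(i <- r | P i) g i.
Proof.
move=> fg; elim/big_rec2: _ => [|i x y Pi]; first lra.
by have := fg i Pi; lra.
Qed.

Lemma Rsum_ge0 r P f : (forall i, P i -> 0 <= f i) -> 0 <= \sum_(i <- r | P i) f i.
Proof. by move=> f0; elim/big_rec: _ => [|i x Pi]; [lra | have := f0 i Pi; lra]. Qed.

Lemma Rabs_sum_le r P f :
  Rabs (\sum_(i <- r | P i) f i) <= \sum_(i <- r | P i) Rabs (f i).
Proof.
elim/big_rec2: _ => [|i x y _ IH]; first by rewrite Rabs_R0; lra.
by apply: Rle_trans (Rabs_triang _ _) _; lra.
Qed.

End RealSums.

Lemma Rsum_filter_le (I : Type) (r : seq I) (P : pred I) (f : I -> R) :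
  (forall i, 0 <= f i) -> \sum_(i <- r | P i) f i <= \sum_(i <- r) f i.
Proof.
move=> f0; rewrite big_mkcond; apply: Rle_sum => i _.
by case: (P i); [lra | exact: f0].
Qed.

Lemma sum_allpairs_mul {I J : Type} {r1 : seq I} {r2 : seq J} (f : I -> R) (g : J -> R) :
  \sum_(p <- [seq (i, j) | i <- r1, j <- r2]) (f p.1 * g p.2) =
  (\sum_(i <- r1) f i) * \sum_(j <- r2) g j.
Proof. by rewrite big_allpairs big_distrl; apply: eq_bigr => i _; rewrite big_distrr. Qed.

Lemma sum_iotaS (m n : nat) (f : nat -> R) :
  \sum_(i <- iota m n.+1) f i = \sum_(i <- iota m n) f i + f (m + n)%N.
Proof. by rewrite -[n.+1]addn1 iotaD big_cat big_seq1. Qed.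

Lemma Rle_sum_subset (I : eqType) (u t : seq I) (g : I -> R) :
  uniq u -> uniq t -> {subset u <= t} -> (forall j, j \in t -> 0 <= g j) ->
  \sum_(j <- u) g j <= \sum_(j <- t) g j.
Proof.
move=> uu ut sut g0; rewrite [X in _ <= X](bigID (mem u)) /=.
have -> : \sum_(j <- t | j \in u) g j = \sum_(j <- u) g j.
  rewrite -big_filter; apply: perm_big; apply: uniq_perm; rewrite ?filter_uniq //.
  by move=> j; rewrite mem_filter; case: (boolP (j \in u)) => // /sut ->.
suff : 0 <= \sum_(j <- t | j \notin u) g j by lra.
by rewrite big_seq_cond; apply: Rsum_ge0 => j /andP[/g0].
Qed.

Lemma Rle_sum_inj {I J : eqType} {s : seq I} {t : seq J} {P : pred I} (phi : I -> J)
    {f : I -> R} {g : J -> R} :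
  uniq s -> uniq t -> (forall j, j \in t -> 0 <= g j) ->
  {in [seq i <- s | P i] &, injective phi} ->
  (forall i, i \in s -> P i -> phi i \in t /\ f i <= g (phi i)) ->
  \sum_(i <- s | P i) f i <= \sum_(j <- t) g j.
Proof.
move=> us ut g0 inj fg; rewrite -big_filter.
apply: Rle_trans (_ : _ <= \sum_(i <- [seq i <- s | P i]) g (phi i)) _.
  rewrite big_seq [X in _ <= X]big_seq; apply: Rle_sum => i; rewrite mem_filter => /andP[Pi si].
  exact: (fg i si Pi).2.
rewrite -(big_map phi xpredT); apply: Rle_sum_subset => //.
  by rewrite map_inj_in_uniq ?filter_uniq.
by move=> j /mapP[i]; rewrite mem_filter => /andP[Pi si] ->; exact: (fg i si Pi).1.
Qed.

Lemma sum_n_iota (a : nat -> R) (M : nat) : sum_n a M = \sum_(l <- iota 0 M.+1) a l.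
Proof.
elim: M => [|M IH]; first by rewrite sum_O big_seq1.
by rewrite sum_Sn sum_iotaS IH.
Qed.

Lemma ex_series_bounded (a : nat -> R) (B : R) :
  (forall n, 0 <= a n) -> (forall M, sum_n a M <= B) -> ex_series a.
Proof.
move=> a0 aB; apply: (ex_finite_lim_seq_incr _ B) => // n.
by rewrite sum_Sn; have := a0 n.+1; rewrite /plus /=; lra.
Qed.

Lemma sum_n_le_Series (a : nat -> R) (M : nat) :
  (forall n, 0 <= a n) -> ex_series a -> sum_n a M <= Series a.
Proof.
move=> a0 sa; apply: is_lim_seq_incr_compare; first exact: Series_correct.
by move=> n; rewrite sum_Sn; have := a0 n.+1; rewrite /plus /=; lra.
Qed.

(* No summability hypothesis: [Series a] is [real (Lim_seq (sum_n a))], and [Lim_seq]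
   (junk when there is no limit) still lies between the bounds on the partial sums. *)
Lemma Rabs_Series_le (a : nat -> R) (B : R) :
  (forall M, Rabs (sum_n a M) <= B) -> Rabs (Series a) <= B.
Proof.
move=> aB; rewrite /Series.
have up : Rbar_le (Lim_seq (sum_n a)) B.
  rewrite -(Lim_seq_const B); apply: Lim_seq_le_loc; exists 0%N => M _.
  by have /Rabs_le_between := aB M; lra.
have lo : Rbar_le (- B) (Lim_seq (sum_n a)).
  rewrite -(Lim_seq_const (- B)); apply: Lim_seq_le_loc; exists 0%N => M _.
  by have /Rabs_le_between := aB M; lra.
by case: (Lim_seq (sum_n a)) up lo => [r | |] //= ? ?; apply: Rabs_le; lra.
Qed.

Lemma sum_n_iota1 (a : nat -> R) (M : nat) :
  a 0%N = 0 -> sum_n a M = \sum_(l <- iota 1 M) a l.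
Proof. by move=> a0; rewrite sum_n_iota big_cons a0 Rplus_0_l. Qed.

(** * Square divisors of n^2 - 4 *)

Section SquareDivisors.
Local Open Scope nat_scope.

Lemma gcdn_sqr m n : gcdn (m * m) (n * n) = gcdn m n * gcdn m n.
Proof.
have [->|n0] := posnP n; first by rewrite muln0 !gcdn0.
set d := gcdn m n; have d0 : 0 < d by rewrite gcdn_gt0 n0 orbT.
have [n' def_n] := dvdnP (dvdn_gcdr m n); have [m' def_m] := dvdnP (dvdn_gcdl m n).
rewrite -/d in def_n def_m.
have cop : coprime m' n'.
  by rewrite /coprime -(eqn_pmul2r d0) mul1n muln_gcdl -def_m -def_n.
rewrite def_m def_n !(mulnACA _ d) -muln_gcdl.
have /eqP-> : coprime (m' * m') (n' * n') by rewrite coprimeMl !coprimeMr cop.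
by rewrite mul1n.
Qed.

Definition sq_split (A v : nat) : nat * (nat * nat) :=
  let d := gcdn (v * v) A in let e := v * v %/ d in (gcdn d e, (gcdn d v, gcdn e v)).

Lemma sq_split_spec {A B v g s1 s2} : 0 < A -> v * v %| A * B ->
  sq_split A v = (g, (s1, s2)) ->
  [/\ 0 < g, g %| gcdn A B, s1 * s2 = v * g, s1 * s1 %| g * A & s2 * s2 %| g * B].
Proof.
rewrite /sq_split => A0 vAB [<- <- <-].
set d := gcdn (v * v) A; set e := v * v %/ d.
have d0 : 0 < d by rewrite gcdn_gt0 A0 orbT.
have de : d * e = v * v by rewrite mulnC divnK ?dvdn_gcdl.
have [A' def_A] := dvdnP (dvdn_gcdr (v * v) A); rewrite -/d in def_A.
have eA' : coprime e A'.
  by rewrite /coprime -(eqn_pmul2l d0) muln1 muln_gcdr de (mulnC d) -def_A.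
have eB : e %| B.
  rewrite -(Gauss_dvdr _ eA') -(dvdn_pmul2l d0) de mulnA (mulnC d) -def_A //.
have dA : d %| A by rewrite def_A dvdn_mull.
have sq1 : gcdn d v * gcdn d v = d * gcdn d e by rewrite -gcdn_sqr -de -muln_gcdr.
have sq2 : gcdn e v * gcdn e v = e * gcdn d e.
  by rewrite -gcdn_sqr -de muln_gcdr gcdnC [d * e]mulnC.
split.
- by rewrite gcdn_gt0 d0.
- by rewrite dvdn_gcd (dvdn_trans (dvdn_gcdl d e) dA) (dvdn_trans (dvdn_gcdr d e) eB).
- apply/eqP; rewrite -(eqn_exp2r _ _ (isT : 0 < 2)) -!mulnn.
  by rewrite mulnACA sq1 sq2 mulnACA de mulnACA.
- by rewrite sq1 mulnC dvdn_mul.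
- by rewrite sq2 mulnC dvdn_mul.
Qed.

Lemma gcdn_sub2_add2 n : 2 <= n -> gcdn (n - 2) (n + 2) %| 4.
Proof.
by move=> n2; rewrite -(subnK n2) addnK -addnA gcdnDl dvdn_gcdr.
Qed.

Lemma sq_split_sub2_add2 {n v g s1 s2} : 3 <= n -> v * v %| n * n - 4 ->
  sq_split (n - 2) v = (g, (s1, s2)) ->
  [/\ 0 < g <= 4, s1 * s2 = v * g, s1 * s1 %| 4 * (n - 2) & s2 * s2 %| 4 * (n + 2)].
Proof.
move=> n3; have A0 : 0 < n - 2 by lia.
rewrite (_ : n * n - 4 = (n - 2) * (n + 2)); last by nia.
move=> vAB /(sq_split_spec A0 vAB) [g0 g_nn s12 s1A s2B].
have g4 : g %| 4 := dvdn_trans g_nn (gcdn_sub2_add2 n (ltnW n3)).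
by rewrite g0 (dvdn_leq _ g4) // !(dvdn_trans _ (dvdn_mul g4 (dvdnn _))).
Qed.

End SquareDivisors.

Lemma Rinv_INR_ge0 (n : nat) : 0 <= / INR n.
Proof.
by case: n => [|n]; [rewrite Rinv_0; lra | apply/Rlt_le/Rinv_0_lt_compat/lt_0_INR; lia].
Qed.

Definition sqdiv_inv_sum (M : nat) : R := \sum_(s <- iota 1 M | (s * s %| M)%N) / INR s.
Definition sqdiv_count (M : nat) : R := \sum_(s <- iota 1 M | (s * s %| M)%N) 1.
Definition Delta_majorant (n : nat) : R :=
  \sum_(v <- iota 1 (n * n) | (v * v %| n * n - 4)%N) / INR v.

Lemma sqdiv_count_ge0 M : 0 <= sqdiv_count M.
Proof. by apply: Rsum_ge0 => s _; lra. Qed.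

Lemma Delta_majorant_ge0 n : 0 <= Delta_majorant n.
Proof. by apply: Rsum_ge0 => v _; apply: Rinv_INR_ge0. Qed.

(* Reindex by the injective map [v |-> sq_split (n - 2) v = (g, (s1, s2))]: then
   [1/v = g / (s1 s2)] with [g | 4], whence the factor [1 + 2 + 3 + 4 = 10]. *)
Lemma Delta_majorant_le n : (3 <= n)%N ->
  Delta_majorant n <= 10 * sqdiv_inv_sum (4 * (n - 2)) * sqdiv_inv_sum (4 * (n + 2)).
Proof.
move=> n3; set A := (n - 2)%N; set B := (n + 2)%N.
pose w (a M : nat) := if (a * a %| M)%N then / INR a else 0.
pose T := [seq (g, ab) | g <- iota 1 4,
             ab <- [seq (a, b) | a <- iota 1 (4 * A), b <- iota 1 (4 * B)]].
have -> : 10 * sqdiv_inv_sum (4 * A) * sqdiv_inv_sum (4 * B) =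
    \sum_(t <- T) (INR t.1 * (w t.2.1 (4 * A)%N * w t.2.2 (4 * B)%N)).
  rewrite (sum_allpairs_mul INR (fun ab => w ab.1 _ * w ab.2 _)).
  rewrite (sum_allpairs_mul (w^~ (4 * A)%N) (w^~ (4 * B)%N)).
  rewrite /sqdiv_inv_sum /w (big_mkcond (fun s => s * s %| 4 * A)%N).
  rewrite (big_mkcond (fun s => s * s %| 4 * B)%N) !big_cons big_nil /=; ring.
have spec := sq_split_sub2_add2 n3.
rewrite /Delta_majorant; apply: (Rle_sum_inj (sq_split A)).
- exact: iota_uniq.
- rewrite !allpairs_uniq ?iota_uniq //; by move=> [? ?] [? ?] _ _ [-> ->].
- move=> [g [a b]] _; apply: Rmult_le_pos; first exact: pos_INR.
  by rewrite /w; apply: Rmult_le_pos; (case: ifP => _; [exact: Rinv_INR_ge0 | lra]).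
- move=> v v'; rewrite !mem_filter => /andP[/spec vAB _] /andP[/spec v'AB _].
  case E: (sq_split A v) => [g [s1 s2]]; case: (vAB _ _ _ E) => /andP[g0 _] s12 _ _.
  case E': (sq_split A v') => [g' [s1' s2']]; case: (v'AB _ _ _ E') => _ s12' _ _.
  by case=> eg e1 e2; apply/eqP; rewrite -(eqn_pmul2r g0) -s12 e1 e2 s12' eg.
move=> v; rewrite mem_iota => /andP[v0 _] /spec vAB.
case E: (sq_split A v) => [g [s1 s2]]; case: (vAB _ _ _ E) => /andP[g0 g_4] s12 s1A s2B.
have /andP[s1_0 s2_0] : ((0 < s1) && (0 < s2))%N by rewrite -muln_gt0 s12 muln_gt0 v0 g0.
have s1_le : (s1 <= 4 * A)%N.
  by apply: leq_trans (leq_pmulr _ s1_0) (dvdn_leq _ s1A); lia.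
have s2_le : (s2 <= 4 * B)%N.
  by apply: leq_trans (leq_pmulr _ s2_0) (dvdn_leq _ s2B); lia.
split.
  by apply: allpairs_f; [|apply: allpairs_f]; rewrite mem_iota; lia.
have s12R : INR s1 * INR s2 = INR v * INR g by rewrite -!mult_INR; apply: f_equal; exact: s12.
rewrite /w /= s1A s2B -Rinv_mult s12R.
have : 0 < INR v by apply: lt_0_INR; lia.
have : 0 < INR g by apply: lt_0_INR; lia.
by move=> *; right; field; lra.
Qed.

(** * Moments of the square-divisor sums *)

Lemma pow_tangent_le (t u : R) (k : nat) : 0 <= t -> 0 <= u ->
  u ^ k.+1 + INR k.+1 * u ^ k * (t - u) <= t ^ k.+1.
Proof.
move=> t0 u0; elim: k => [|k IH]; first by rewrite /=; lra.
have : 0 <= INR k.+1 * u ^ k * ((t - u) * (t - u)).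
  by apply: Rmult_le_pos; [apply: Rmult_le_pos; [exact: pos_INR | exact: pow_le] |
    exact: Rle_0_sqr].
have : t * (u ^ k.+1 + INR k.+1 * u ^ k * (t - u)) <= t ^ k.+2.
  exact: Rmult_le_compat_l.
have -> : t * (u ^ k.+1 + INR k.+1 * u ^ k * (t - u)) =
    u ^ k.+2 + INR k.+2 * u ^ k.+1 * (t - u) + INR k.+1 * u ^ k * ((t - u) * (t - u)).
  by rewrite [INR k.+2]S_INR /=; ring.
lra.
Qed.

(* Jensen's inequality for [t |-> t ^ k.+1] at the points [a i / c i] with weights [c i],
   obtained from the tangent line [pow_tangent_le] at the weighted mean. *)
Lemma pow_sum_le_weighted (I : Type) (r : seq I) (a c : I -> R) (k : nat) :
  (forall i, 0 <= a i) -> (forall i, 0 < c i) ->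
  (\sum_(i <- r) a i) ^ k.+1 <=
  (\sum_(i <- r) c i) ^ k * \sum_(i <- r) (a i ^ k.+1 / c i ^ k).
Proof.
move=> a0 c0; case: r => [|i0 r]; first by rewrite !big_nil Rmult_0_r pow_i; [lra | lia].
set r' := i0 :: r; set SA := \sum_(i <- r') a i; set SC := \sum_(i <- r') c i.
have SA0 : 0 <= SA by apply: Rsum_ge0.
have SC0 : 0 < SC.
  rewrite /SC big_cons; have := c0 i0.
  have : 0 <= \sum_(i <- r) c i by apply: Rsum_ge0 => i _; apply/Rlt_le.
  lra.
set u := SA / SC; have u0 : 0 <= u by apply: Rdiv_le_0_compat.
set K1 := INR k.+1 * u ^ k.
have tangent i : c i * u ^ k.+1 + K1 * a i + (- (K1 * u)) * c i <= a i ^ k.+1 / c i ^ k.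
  have ci := c0 i; have t0 : 0 <= a i / c i by apply: Rdiv_le_0_compat.
  have := Rmult_le_compat_l _ _ _ (Rlt_le _ _ ci) (pow_tangent_le _ _ k t0 u0).
  have -> : a i ^ k.+1 / c i ^ k = c i * (a i / c i) ^ k.+1.
    by rewrite /Rdiv Rpow_mult_distr pow_inv /=; field; split; [apply: pow_nonzero|]; lra.
  have -> : c i * (u ^ k.+1 + INR k.+1 * u ^ k * (a i / c i - u)) =
     c i * u ^ k.+1 + K1 * a i + (- (K1 * u)) * c i by rewrite /K1; field; lra.
  done.
have lin : \sum_(i <- r') (c i * u ^ k.+1 + K1 * a i + - (K1 * u) * c i) =
    SC * u ^ k.+1.
  (* [U] keeps [/=] from unfolding the power. *)
  set U := u ^ k.+1; rewrite !big_split /= -big_distrl -!big_distrr /= -/SA -/SC /u.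
  by field; lra.
have := Rle_sum _ r' xpredT _ _ (fun i _ => tangent i); rewrite lin => H.
have -> : SA ^ k.+1 = SC ^ k * (SC * u ^ k.+1).
  rewrite /u /Rdiv Rpow_mult_distr pow_inv -!tech_pow_Rmult.
  by field; split; [apply: pow_nonzero |]; lra.
by apply: Rmult_le_compat_l => //; apply: pow_le; lra.
Qed.

Lemma Rpower_telescope_le (e x : R) : 0 < e -> 1 < x ->
  e * Rpower x (-(1 + e)) <= Rpower (x - 1) (- e) - Rpower x (- e).
Proof.
move=> e0 x1; set y := ln x - ln (x - 1).
have y_ge : / x <= y.
  have := exp_ineq1_le (- y).
  rewrite /y (_ : - (ln x - ln (x - 1)) = ln (x - 1) + - ln x); last by ring.
  have x0 : 0 < x by lra.
  have x10 : 0 < x - 1 by lra.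
  rewrite exp_plus exp_Ropp !exp_ln //.
  by rewrite (_ : (x - 1) * / x = 1 - / x); [lra | field; lra].
have -> : Rpower (x - 1) (- e) = Rpower x (- e) * exp (e * y).
  by rewrite /Rpower -exp_plus /y; f_equal; ring.
have -> : Rpower x (-(1 + e)) = Rpower x (- e) * / x.
  rewrite (_ : -(1 + e) = - e + - 1); last ring.
  by rewrite Rpower_plus (Rpower_Ropp x 1) Rpower_1 //; lra.
have := exp_ineq1_le (e * y); have := exp_pos (- e * ln x).
rewrite -/(Rpower x (- e)) => Hx Hexp.
have : e * / x <= e * y by apply: Rmult_le_compat_l; lra.
nra.
Qed.

Lemma Rpower_INR1 (y : R) : Rpower (INR 1) y = 1.
Proof. by rewrite /Rpower (_ : INR 1 = 1) // ln_1 Rmult_0_r exp_0. Qed.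

Lemma zeta_partial_le (e : R) (M : nat) : 0 < e ->
  \sum_(s <- iota 1 M) Rpower (INR s) (-(1 + e)) <= 1 + / e.
Proof.
move=> e0; pose p s := Rpower (INR s) (- e).
have tele n : e * \sum_(s <- iota 2 n) Rpower (INR s) (-(1 + e)) <= 1 - p n.+1.
  elim: n => [|n IH]; first by rewrite big_nil /p Rpower_INR1; lra.
  have := Rpower_telescope_le e (INR n.+2) e0.
  rewrite -/(p n.+2) (_ : INR n.+2 - 1 = INR n.+1) -/(p n.+1); last by rewrite S_INR; ring.
  have : 1 < INR n.+2 by rewrite !S_INR; have := pos_INR n; lra.
  by rewrite sum_iotaS Rmult_plus_distr_l add2n => n2 /(_ n2); lra.
case: M => [|M]; first by rewrite big_nil; have := Rinv_0_lt_compat e e0; lra.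
rewrite (_ : iota 1 M.+1 = 1%N :: iota 2 M) // big_cons Rpower_INR1.
apply: Rplus_le_compat_l; apply: (Rmult_le_reg_l e) => //; rewrite Rinv_r; last lra.
have : 0 < p M.+1 by apply: exp_pos.
by have := tele M; lra.
Qed.

(* With the weights [c s = s ^ (-1 - 1/k)], every term [(1/s) ^ k.+1 / c s ^ k] equals 1,
   and [sum_s c s <= 1 + k]. *)
Lemma sqdiv_inv_sum_pow (M k : nat) : (0 < k)%N ->
  sqdiv_inv_sum M ^ k.+1 <= INR k.+1 ^ k * sqdiv_count M.
Proof.
move=> k0; have kR : 0 < INR k by apply: lt_0_INR; lia.
pose c s := Rpower (INR s) (-(1 + / INR k)).
rewrite /sqdiv_inv_sum /sqdiv_count -!(big_filter _ (fun s => s * s %| M)%N).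
set r := [seq s <- iota 1 M | _].
apply: Rle_trans (pow_sum_le_weighted _ r _ c k (fun s => Rinv_INR_ge0 s) (fun s => exp_pos _)) _.
have -> : \sum_(s <- r) ((/ INR s) ^ k.+1 / c s ^ k) = \sum_(s <- r) 1.
  rewrite big_seq [in RHS]big_seq; apply: eq_bigr => s.
  rewrite mem_filter mem_iota => /andP[_ /andP[s0 _]].
  have sR : 0 < INR s by apply: lt_0_INR; lia.
  have -> : c s ^ k = / INR s ^ k.+1.
    rewrite /c -Rpower_pow; last exact: exp_pos.
    rewrite Rpower_mult (_ : -(1 + / INR k) * INR k = - INR k.+1).
      by rewrite Rpower_Ropp Rpower_pow.
    by rewrite S_INR; field; lra.
  by rewrite pow_inv; field; apply: pow_nonzero; lra.
apply: Rmult_le_compat_r; first by apply: Rsum_ge0 => *; lra.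
apply: pow_incr; split; first by apply: Rsum_ge0 => s _; apply/Rlt_le/exp_pos.
apply: Rle_trans (_ : \sum_(s <- iota 1 M) c s <= _).
  by rewrite big_filter; apply: Rsum_filter_le => s; apply/Rlt_le/exp_pos.
by apply: Rle_trans (zeta_partial_le _ _ (Rinv_0_lt_compat _ kR)) _; rewrite Rinv_inv S_INR; lra.
Qed.

Lemma count_multiples (D M : nat) : (0 < D)%N ->
  \sum_(m <- iota 1 M | (D %| m)%N) 1 = INR (M %/ D).
Proof.
move=> D0; elim: M => [|M IH]; first by rewrite big_nil div0n.
rewrite big_mkcond sum_iotaS -big_mkcond IH add1n (divnS _ D0) plus_INR.
by case: (D %| M.+1)%N => /=; lra.
Qed.

Lemma INR_divn_le (M D : nat) : (0 < D)%N -> INR (M %/ D) <= INR M / INR D.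
Proof.
move=> D0; have DR : 0 < INR D by apply: lt_0_INR; lia.
apply: (Rmult_le_reg_r (INR D)) => //; rewrite /Rdiv Rmult_assoc Rinv_l; last lra.
by rewrite Rmult_1_r -mult_INR; apply: le_INR; apply/leP; exact: leq_divM.
Qed.

Lemma inv_sq_sum_le (M : nat) : \sum_(s <- iota 1 M) / INR (s * s) <= 2.
Proof.
apply: Rle_trans (_ : _ <= 1 + / 1) _; last by rewrite Rinv_1; lra.
apply: Rle_trans (zeta_partial_le 1 M Rlt_0_1); right.
rewrite big_seq [in RHS]big_seq; apply: eq_bigr => s; rewrite mem_iota => /andP[s0 _].
have sR : 0 < INR s by apply: lt_0_INR; lia.
by rewrite (_ : -(1 + 1) = - INR 2) // Rpower_Ropp Rpower_pow // mult_INR /= Rmult_1_r.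
Qed.

Lemma sqdiv_count_sum (M : nat) : \sum_(m <- iota 1 M) sqdiv_count m <= 2 * INR M.
Proof.
apply: Rle_trans (_ : _ <= \sum_(m <- iota 1 M) \sum_(s <- iota 1 M | (s * s %| m)%N) 1) _.
  rewrite big_seq [X in _ <= X]big_seq; apply: Rle_sum => m; rewrite mem_iota => /andP[_ mM].
  rewrite /sqdiv_count (_ : iota 1 M = iota 1 m ++ iota m.+1 (M - m)); last first.
    by rewrite -{1}(subnKC (_ : m <= M)%N) ?iotaD ?add1n //; lia.
  rewrite big_cat /=.
  have : 0 <= \sum_(s <- iota m.+1 (M - m) | (s * s %| m)%N) 1 by apply: Rsum_ge0 => *; lra.
  lra.
rewrite (exchange_big_dep xpredT) //=.
apply: Rle_trans (_ : _ <= \sum_(s <- iota 1 M) (INR M * / INR (s * s))) _.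
  rewrite big_seq [X in _ <= X]big_seq; apply: Rle_sum => s; rewrite mem_iota => /andP[s0 _].
  have ss0 : (0 < s * s)%N by rewrite muln_gt0 s0.
  by rewrite count_multiples //; apply: INR_divn_le.
rewrite -big_distrr /=; have := Rmult_le_compat_l _ _ _ (pos_INR M) (inv_sq_sum_le M); lra.
Qed.

Lemma sqdiv_count_sum_inj {s : seq nat} {phi : nat -> nat} {M : nat} :
  uniq s -> {in s &, injective phi} -> (forall n, n \in s -> 0 < phi n <= M)%N ->
  \sum_(n <- s) sqdiv_count (phi n) <= 2 * INR M.
Proof.
move=> us inj phiM; apply: Rle_trans (sqdiv_count_sum M).
apply: (Rle_sum_inj phi) => //.
- exact: iota_uniq.
- by move=> m _; apply: sqdiv_count_ge0.
- by move=> n n'; rewrite !mem_filter => /= ns n's; apply: inj.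
by move=> n ns _; split; [rewrite mem_iota; have := phiM n ns; lia | lra].
Qed.

Lemma Delta_majorant_pow_le (n K : nat) : (3 <= n)%N -> (0 < K)%N ->
  Delta_majorant n ^ K <= 10 ^ K * INR (K + K) ^ (K + K).-1 / 2 *
    (sqdiv_count (4 * (n - 2)) + sqdiv_count (4 * (n + 2))).
Proof.
move=> n3 K0.
have pow2K M : sqdiv_inv_sum M ^ (K + K) <= INR (K + K) ^ (K + K).-1 * sqdiv_count M.
  have k0 : (0 < (K + K).-1)%N by lia.
  by have := sqdiv_inv_sum_pow M _ k0; rewrite prednK //; lia.
have := pow2K (4 * (n - 2))%N; have := pow2K (4 * (n + 2))%N.
set H1 := sqdiv_inv_sum (4 * (n - 2)); set H2 := sqdiv_inv_sum (4 * (n + 2)).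
set G1 := sqdiv_count (4 * (n - 2)); set G2 := sqdiv_count (4 * (n + 2)) => h2 h1.
have am_gm : (H1 * H2) ^ K <= (H1 ^ (K + K) + H2 ^ (K + K)) / 2.
  by rewrite Rpow_mult_distr !pow_add; have := Rle_0_sqr (H1 ^ K - H2 ^ K); rewrite /Rsqr; nra.
apply: Rle_trans (pow_incr _ _ K (conj (Delta_majorant_ge0 n) (Delta_majorant_le n n3))) _.
rewrite Rmult_assoc Rpow_mult_distr.
have ten0 : 0 <= 10 ^ K by apply: pow_le; lra.
apply: Rle_trans (Rmult_le_compat_l _ _ _ ten0 am_gm) _.
have := Rmult_le_compat_l _ _ _ ten0 (Rplus_le_compat _ _ _ _ h1 h2).
nra.
Qed.

Lemma Delta_majorant_moment (K : nat) : (0 < K)%N -> exists C, 1 <= C /\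
  forall L, \sum_(n <- iota 3 L) Delta_majorant n ^ K <= C * INR (L + 4).
Proof.
move=> K0; set c := 10 ^ K * INR (K + K) ^ (K + K).-1 / 2.
have p1 : 1 <= 10 ^ K by apply: pow_R1_Rle; lra.
have p2 : 1 <= INR (K + K) ^ (K + K).-1 by apply: pow_R1_Rle; apply: (le_INR 1); lia.
have c0 : 0 <= c by rewrite /c; nra.
exists (16 * c); split; first by rewrite /c; nra.
move=> L.
have bound (phi : nat -> nat) : {in iota 3 L &, injective phi} ->
    (forall n, n \in iota 3 L -> 0 < phi n <= 4 * (L + 4))%N ->
    \sum_(n <- iota 3 L) sqdiv_count (phi n) <= 8 * INR (L + 4).
  move=> inj range; apply: Rle_trans (sqdiv_count_sum_inj (iota_uniq _ _) inj range) _.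
  by rewrite mult_INR /=; right; ring.
have S1 : \sum_(n <- iota 3 L) sqdiv_count (4 * (n - 2)) <= 8 * INR (L + 4).
  by apply: bound => [n n' | n]; rewrite ?mem_iota; lia.
have S2 : \sum_(n <- iota 3 L) sqdiv_count (4 * (n + 2)) <= 8 * INR (L + 4).
  by apply: bound => [n n' | n]; rewrite ?mem_iota; lia.
apply: Rle_trans (_ : _ <= \sum_(n <- iota 3 L)
    c * (sqdiv_count (4 * (n - 2)) + sqdiv_count (4 * (n + 2)))) _.
  rewrite big_seq [X in _ <= X]big_seq; apply: Rle_sum => n; rewrite mem_iota => /andP[n3 _].
  exact: Delta_majorant_pow_le.
rewrite -big_distrr big_split /=.
by have := Rmult_le_compat_l _ _ _ c0 (Rplus_le_compat _ _ _ _ S1 S2); lra.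
Qed.

(** * Smooth numbers *)

Lemma leRbP (a b : R) : reflect (a <= b) (leRb a b).
Proof. by rewrite /leRb; case: Rle_dec => ab; constructor. Qed.

Lemma ltRbP (a b : R) : reflect (a < b) (ltRb a b).
Proof. by rewrite /ltRb; case: Rlt_dec => ab; constructor. Qed.

Lemma INR_expn (p e : nat) : INR (p ^ e)%N = INR p ^ e.
Proof. by elim: e => [|e IH]; rewrite ?expn0 // expnS mult_INR IH. Qed.

Lemma leRb_INR (a b : nat) : leRb (INR a) (INR b) = (a <= b)%N.
Proof. by apply/leRbP/idP => [/INR_le/leP | /leP/le_INR]. Qed.

Lemma smooth_INR (k l : nat) :
  smooth (INR k) l = (0 < l)%N && all (fun p => p <= k)%N (primes l).
Proof. by rewrite /smooth; congr (_ && _); apply: eq_all => p; rewrite leRb_INR. Qed.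

Lemma smooth_mono (P Q : R) (l : nat) : P <= Q -> smooth P l -> smooth Q l.
Proof.
move=> PQ /andP[l0 /allP Pl]; rewrite /smooth l0; apply/allP => p /Pl /leRbP pP.
by apply/leRbP; lra.
Qed.

Lemma smooth_succ_prime_split (k l : nat) : prime k.+1 -> smooth (INR k.+1) l ->
  let m := (l %/ k.+1 ^ logn k.+1 l)%N in l = (m * k.+1 ^ logn k.+1 l)%N /\ smooth (INR k) m.
Proof.
move=> pr; rewrite smooth_INR => /andP[l0 /allP lk] m.
have [m' cop l_eq] := pfactor_coprime pr l0.
have -> : m = m' by rewrite /m {1}l_eq mulnK // expn_gt0 prime_gt0.
split => //; rewrite smooth_INR; have m'0 : (0 < m')%N by move: l0; rewrite l_eq muln_gt0 => /andP[].
rewrite m'0; apply/allP => q; rewrite mem_primes => /and3P[qp _ qm'].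
have : (q <= k.+1)%N.
  by apply: lk; rewrite mem_primes qp l0 l_eq dvdn_mulr.
rewrite leq_eqVlt ltnS; case: eqVneq => [qk _ | //].
by move: cop; rewrite -qk prime_coprime // qm'.
Qed.

Lemma geometric_sum_le (x : R) (M : nat) : 0 <= x -> 2 * x <= 1 ->
  \sum_(e <- iota 0 M) x ^ e <= 2.
Proof.
move=> x0 x1; suff : \sum_(e <- iota 0 M) x ^ e <= 2 - 2 * x ^ M.
  by have := pow_le x M x0; lra.
elim: M => [|M IH]; first by rewrite big_nil /=; lra.
by rewrite sum_iotaS add0n /=; have := pow_le x M x0; nra.
Qed.

Lemma smooth_INR0 (l : nat) : smooth (INR 0) l -> l = 1%N.
Proof.
rewrite smooth_INR => /andP[l0 l_sm]; suff : primes l == [::] by rewrite primes_eq0; lia.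
case: (primes l) (mem_primes^~ l) l_sm => [|p ps] // /(_ p).
by rewrite inE eqxx /= => /esym /and3P[/prime_gt1 p1 _ _] /andP[p0 _]; lia.
Qed.

Lemma smooth_succ_nonprime (k : nat) : ~~ prime k.+1 -> smooth (INR k.+1) =1 smooth (INR k).
Proof.
move=> npr l; rewrite !smooth_INR; congr (_ && _); apply: eq_in_all => p.
rewrite mem_primes => /andP[pp _]; rewrite leq_eqVlt ltnS.
by case: eqVneq => [pk | //]; move: npr; rewrite -pk pp.
Qed.

(* Write [l = m * p ^ e] with [m] coprime to the prime [p = k.+1]. *)
Lemma smooth_inv_sum_succ_prime (k M : nat) : prime k.+1 ->
  \sum_(l <- iota 1 M | smooth (INR k.+1) l) / INR l <=
  (\sum_(e <- iota 0 M) (/ INR k.+1) ^ e) * \sum_(m <- iota 1 M | smooth (INR k) m) / INR m.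
Proof.
move=> pr; pose p := k.+1; have p1 : (1 < p)%N by apply: prime_gt1.
have pR : 0 < INR p by apply: lt_0_INR; lia.
pose G m := if smooth (INR k) m then / INR m else 0.
rewrite [X in _ <= _ * X]big_mkcond -/(G _) -(sum_allpairs_mul (fun e => (/ INR p) ^ e) G).
apply: (Rle_sum_inj (fun l => (logn p l, l %/ p ^ logn p l))%N).
- exact: iota_uniq.
- by rewrite allpairs_uniq ?iota_uniq // => -[? ?] [? ?] _ _ [-> ->].
- move=> [e m] _; apply: Rmult_le_pos; first by apply: pow_le; apply: Rinv_INR_ge0.
  by rewrite /G; case: ifP => _; [apply: Rinv_INR_ge0 | lra].
- move=> l l' _ _ [E1 E2].
  by rewrite -[l](divnK (pfactor_dvdnn p l)) -[l'](divnK (pfactor_dvdnn p l')) E2 E1.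
move=> l; rewrite mem_iota add1n ltnS => /andP[l0 lM] /(smooth_succ_prime_split _ _ pr).
set e := logn p l; set m := (l %/ p ^ e)%N => -[l_eq m_sm].
have m0 : (0 < m)%N by case/andP: m_sm.
have el : (e < l)%N by apply: leq_trans (ltn_expl e p1) (dvdn_leq l0 (pfactor_dvdnn p l)).
have ml : (m <= l)%N by rewrite [X in (_ <= X)%N]l_eq leq_pmulr // expn_gt0 prime_gt0.
split; first by apply: allpairs_f; rewrite mem_iota; lia.
rewrite /G [(_, _).1]/= [(_, _).2]/= m_sm {1}l_eq mult_INR INR_expn pow_inv -/p.
have : 0 < INR m by apply: lt_0_INR; lia.
have : 0 < INR p ^ e by apply: pow_lt.
by move=> *; right; field; lra.
Qed.

Lemma smooth_inv_sum_le (k M : nat) :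
  \sum_(l <- iota 1 M | smooth (INR k) l) / INR l <= 2 ^ k.
Proof.
elim: k M => [|k IH] M.
  apply: Rle_trans (_ : _ <= \sum_(l <- [:: 1%N]) / INR l) _; last first.
    by rewrite big_seq1 Rinv_1 /=; lra.
  apply: (Rle_sum_inj id) => //; first exact: iota_uniq.
    by move=> l _; apply: Rinv_INR_ge0.
  by move=> l _ /smooth_INR0 ->; split; [rewrite inE | lra].
have := IH M; have : 0 <= 2 ^ k by apply: pow_le; lra.
rewrite [2 ^ k.+1]/=; have [pr|npr] := boolP (prime k.+1); last first.
  by rewrite (eq_bigl _ _ (smooth_succ_nonprime k npr)); lra.
move=> *; apply: Rle_trans (smooth_inv_sum_succ_prime k M pr) _.
apply: Rmult_le_compat => //.
- by apply: Rsum_ge0 => e _; apply: pow_le; apply: Rinv_INR_ge0.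
- by apply: Rsum_ge0 => m _; apply: Rinv_INR_ge0.
apply: geometric_sum_le; first exact: Rinv_INR_ge0.
have : 2 <= INR k.+1 by apply: (le_INR 2); have := prime_gt1 pr; lia.
by move=> k2; have := Rinv_le_contravar 2 _ ltac:(lra) k2; lra.
Qed.

Lemma smooth_inv_summable (P : R) : ex_series (fun l => if smooth P l then / INR l else 0).
Proof.
have [k Pk] := INR_unbounded P.
apply: (ex_series_bounded _ (2 ^ k)) => [l | M].
  by case: ifP => _; [apply: Rinv_INR_ge0 | lra].
rewrite sum_n_iota1 //; apply: Rle_trans (smooth_inv_sum_le k M).
rewrite [X in _ <= X]big_mkcond; apply: Rle_sum => l _.
case: ifP => [/(smooth_mono _ _ _ (Rlt_le _ _ Pk)) -> | _]; first lra.
by case: ifP => _; [apply: Rinv_INR_ge0 | lra].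
Qed.

Lemma tail_summable (P N : R) :
  ex_series (fun l => if ltRb (sqrt N) (INR l) && smooth P l then / INR l else 0).
Proof.
apply: ex_series_le (smooth_inv_summable P) => l; rewrite /norm /= /abs /=.
case: ifP => [/andP[_ ->] | _]; first by rewrite Rabs_pos_eq; [lra | apply: Rinv_INR_ge0].
by rewrite Rabs_R0; case: ifP => _; [apply: Rinv_INR_ge0 | lra].
Qed.

Lemma tail_sum_ge0 (P N : R) : 0 <= tail_sum P N.
Proof.
have t0 l : 0 <= if ltRb (sqrt N) (INR l) && smooth P l then / INR l else 0.
  by case: ifP => _; [apply: Rinv_INR_ge0 | lra].
by apply: Rle_trans (sum_n_le_Series _ 0 t0 (tail_summable P N)); rewrite sum_O.
Qed.

(** * The inner sum over smooth l *)

Lemma chi_abs_le1 (d l : nat) : Rabs (chi d l) <= 1.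
Proof.
rewrite /chi; elim: (primes l) => [|p ps IH] /=; first by rewrite Rabs_R1; lra.
have hp : Rabs (chi_prime d p) <= 1.
  by rewrite /chi_prime; repeat case: ifP => _; rewrite ?Rabs_R0 ?Rabs_Ropp ?Rabs_R1; lra.
have : Rabs (chi_prime d p) ^ logn p l <= 1.
  by rewrite -(pow1 (logn p l)); apply: pow_incr; split; [exact: Rabs_pos | exact: hp].
rewrite Rabs_mult -RPow_abs; have := Rabs_pos (chi_prime d p) .
have := pow_le _ (logn p l) (Rabs_pos (chi_prime d p)); have := Rabs_pos (foldr _ 1 ps).
nra.
Qed.

Lemma exp_neg_sub1_bound (y : R) : 0 <= y ->
  Rabs (exp (- y) - 1) <= 1 /\ Rabs (exp (- y) - 1) <= y.
Proof.
move=> y0; have : exp (- y) <= 1.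
  case: (Rle_lt_or_eq_dec 0 y y0) => [y_pos | <-]; last by rewrite Ropp_0 exp_0; lra.
  by rewrite -exp_0; apply/Rlt_le/exp_increasing; lra.
have := exp_ineq1_le (- y); have := exp_pos (- y).
by move=> *; rewrite Rabs_left1; [split|]; lra.
Qed.

Lemma inner_term_bound (d l : nat) (N : R) : (0 < l)%N -> 0 < N ->
  let a := Rabs (chi d l / INR l * (exp (- INR l / N) - 1)) in a <= / INR l /\ a <= / N.
Proof.
move=> l0 N0 a; have lR : 0 < INR l by apply: lt_0_INR; lia.
have [e1 eN] : Rabs (exp (- (INR l / N)) - 1) <= 1 /\
    Rabs (exp (- (INR l / N)) - 1) <= INR l / N.
  by apply: exp_neg_sub1_bound; apply: Rdiv_le_0_compat; lra.
have aE : a = Rabs (chi d l) * / INR l * Rabs (exp (- (INR l / N)) - 1).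
  rewrite /a /Rdiv !Rabs_mult Rabs_inv (Rabs_pos_eq (INR l)); last lra.
  by rewrite Ropp_mult_distr_l.
rewrite aE; set Z := Rabs (exp _ - 1); have Z0 : 0 <= Z by apply: Rabs_pos.
have YZ0 : 0 <= / INR l * Z by apply: Rmult_le_pos; [apply/Rlt_le/Rinv_0_lt_compat|].
have chiZ : Rabs (chi d l) * / INR l * Z <= / INR l * Z.
  rewrite Rmult_assoc -{2}[/ INR l * Z]Rmult_1_l; apply: Rmult_le_compat_r => //.
  exact: chi_abs_le1.
split; apply: Rle_trans chiZ _.
  by rewrite -{2}[/ INR l]Rmult_1_r; apply: Rmult_le_compat_l; [apply/Rlt_le/Rinv_0_lt_compat|].
rewrite (_ : / N = / INR l * (INR l / N)); last by field; lra.
by apply: Rmult_le_compat_l; [apply/Rlt_le/Rinv_0_lt_compat|].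
Qed.

Lemma count_le_real (s : R) (M : nat) : 0 <= s ->
  \sum_(l <- iota 1 M | leRb (INR l) s) 1 <= s.
Proof.
move=> s0; suff [] : \sum_(l <- iota 1 M | leRb (INR l) s) 1 <= s /\
    \sum_(l <- iota 1 M | leRb (INR l) s) 1 <= INR M by [].
elim: M => [|M [IH1 IH2]]; first by rewrite big_nil /=; lra.
rewrite big_mkcond sum_iotaS -big_mkcond add1n S_INR.
by case: leRbP => Ms /=; split; lra.
Qed.

Lemma inner_sum_le (P N : R) (d : nat) : 0 < N ->
  Rabs (inner_sum P N d) <= / sqrt N + tail_sum P N.
Proof.
move=> N0; have sN : 0 < sqrt N by apply: sqrt_lt_R0.
set a := fun l => if smooth P l then chi d l / INR l * (exp (- INR l / N) - 1) else 0.
set t := fun l => if ltRb (sqrt N) (INR l) && smooth P l then / INR l else 0.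
have t0 l : 0 <= t l by rewrite /t; case: ifP => _; [apply: Rinv_INR_ge0 | lra].
have term l : (0 < l)%N -> Rabs (a l) <= (if leRb (INR l) (sqrt N) then / N else 0) + t l.
  move=> l0; rewrite /a /t; case: ifP => sm; last first.
    by rewrite Rabs_R0 andbF; case: ifP => _; have := Rinv_0_lt_compat _ N0; lra.
  have [al aN] := inner_term_bound d l N l0 N0.
  by rewrite andbT; case: leRbP => ls; case: ltRbP => ls' /=; lra.
apply: Rabs_Series_le => M; rewrite sum_n_iota1 //.
apply: Rle_trans (Rabs_sum_le _ _ _ _) _.
apply: Rle_trans (_ : _ <= \sum_(l <- iota 1 M)
    ((if leRb (INR l) (sqrt N) then / N else 0) + t l)) _.
  rewrite big_seq [X in _ <= X]big_seq; apply: Rle_sum => l.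
  by rewrite mem_iota => /andP[l0 _]; apply: term.
rewrite big_split /= -(sum_n_iota1 t); last by rewrite /t [smooth _ 0]/= andbF.
apply: Rplus_le_compat; last exact: sum_n_le_Series (tail_summable P N).
have -> : \sum_(l <- iota 1 M) (if leRb (INR l) (sqrt N) then / N else 0) =
    / N * \sum_(l <- iota 1 M | leRb (INR l) (sqrt N)) 1.
  by rewrite big_distrr [RHS]big_mkcond /=; apply: eq_bigr => l _; case: ifP => _; ring.
rewrite -[/ sqrt N](_ : / N * sqrt N = _); last first.
  by rewrite -{1}(sqrt_sqrt N); [field|]; lra.
apply: Rmult_le_compat_l; first by apply/Rlt_le/Rinv_0_lt_compat.
by apply: count_le_real; lra.
Qed.

Lemma tail_bound_gt0 (P N : R) : 0 < N -> 0 < / sqrt N + tail_sum P N.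
Proof.
move=> N0; have := tail_sum_ge0 P N.
by have := Rinv_0_lt_compat _ (sqrt_lt_R0 _ N0); lra.
Qed.

Lemma Delta23_abs_le (P N : R) (n : nat) : 0 < N ->
  Rabs (Delta23 P N n) <= (/ sqrt N + tail_sum P N) * Delta_majorant n.
Proof.
move=> N0; have B0 := Rlt_le _ _ (tail_bound_gt0 P N N0).
rewrite /Delta23 sumRE /Delta_majorant big_distrr [X in _ <= X]big_mkcond /=.
apply: Rle_trans (Rabs_sum_le _ _ _ _) _; apply: Rle_sum => v _.
case: ifP => [/and3P[-> _ _] | _]; last first.
  by rewrite Rabs_R0; case: ifP => _; [apply: Rmult_le_pos => //; apply: Rinv_INR_ge0 | lra].
rewrite Rabs_mult (Rabs_pos_eq (/ INR v)); last exact: Rinv_INR_ge0.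
rewrite Rmult_comm.
by apply: Rmult_le_compat_r; [apply: Rinv_INR_ge0 | apply: inner_sum_le].
Qed.

Lemma sum_n_le_iota (x : R) (f : nat -> R) : 0 <= x -> (forall n, 0 <= f n) ->
  exists L, INR L <= x + 1 /\ sum_n_le x f <= \sum_(n <- iota 3 L) f n.
Proof.
move=> x0 f0; exists (Z.to_nat (up x)); split.
  have [h1 h2] := archimed x.
  by rewrite INR_IZR_INZ Z2Nat.id; [lra | apply: le_IZR; lra].
by rewrite /sum_n_le sumRE; apply: Rle_sum => n _; case: ifP => _; [lra | exact: f0].
Qed.

Lemma Delta23_moment_le (K : nat) : (0 < K)%N -> exists C, 1 <= C /\
  forall P x N, 1 <= x -> 0 < N ->
    / x * sum_n_le x (fun n => Rabs (Delta23 P N n) ^ K) <=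
    C * (/ sqrt N + tail_sum P N) ^ K.
Proof.
move=> K0; have [C [C1 HC]] := Delta_majorant_moment K K0.
exists (6 * C); split; first lra.
move=> P x N x1 N0; set B := / sqrt N + tail_sum P N.
have BK0 : 0 <= B ^ K by apply/pow_le/Rlt_le/tail_bound_gt0.
have [L [Lx HL]] := sum_n_le_iota x _ ltac:(lra) (fun n => pow_le _ K (Rabs_pos (Delta23 P N n))).
have x0 : 0 <= / x by apply/Rlt_le/Rinv_0_lt_compat; lra.
apply: Rle_trans (Rmult_le_compat_l _ _ _ x0 HL) _.
have : \sum_(n <- iota 3 L) Rabs (Delta23 P N n) ^ K <= B ^ K * (C * (6 * x)).
  apply: Rle_trans (_ : _ <= \sum_(n <- iota 3 L) (B ^ K * Delta_majorant n ^ K)) _.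
    apply: Rle_sum => n _; rewrite -Rpow_mult_distr; apply: pow_incr.
    by split; [apply: Rabs_pos | apply: Delta23_abs_le].
  rewrite -big_distrr /=; apply: Rmult_le_compat_l => //.
  apply: Rle_trans (HC L) _; apply: Rmult_le_compat_l; first lra.
  by rewrite plus_INR (_ : INR 4 = 4); [lra | rewrite /=; ring].
move=> H; apply: Rle_trans (Rmult_le_compat_l _ _ _ x0 H) _; right; field; lra.
Qed.

Lemma rpow_inv_le (y A B : R) (K : nat) : (0 < K)%N -> 1 <= A -> 0 < B ->
  y <= A * B ^ K -> rpow y (/ INR K) <= A * B.
Proof.
move=> K0 A1 B0 yAB; rewrite /rpow; case: Rle_dec => y0 /=; first nra.
have {}y0 := Rnot_le_lt _ _ y0.
have KR : 1 <= INR K by apply: (le_INR 1); lia.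
have Kinv : 0 <= / INR K by apply/Rlt_le/Rinv_0_lt_compat; lra.
apply: Rle_trans (Rle_Rpower_l _ _ _ Kinv (conj y0 yAB)) _.
rewrite -Rpower_mult_distr; [| lra | exact: pow_lt].
rewrite -(Rpower_pow K B) // Rpower_mult Rinv_r ?Rpower_1 //; last lra.
apply: Rmult_le_compat_r; first lra.
rewrite -{2}(Rpower_1 A); last lra.
by apply: Rle_Rpower => //; rewrite -Rinv_1; apply: Rinv_le_contravar; lra.
Qed.

Theorem lemma3p3 (q : nat) (hq : (1 < q)%N) :
  exists C : R, 0 < C /\
  forall P x N : R, 2 <= P -> 1 <= x -> 1 <= N ->
    rpow (/ x * sum_n_le x (fun n => Rabs (Delta23 P N n) ^ (2 * q)))
         (/ INR (2 * q))
    <= C * (/ sqrt N + tail_sum P N).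
Proof.
have q0 : (0 < 2 * q)%N by lia.
have [C [C1 HC]] := Delta23_moment_le (2 * q) q0.
exists C; split; first lra.
move=> P x N _ x1 N1; apply: rpow_inv_le; [lia | done | |].
- by apply: tail_bound_gt0; lra.
- by apply: HC; lra.
Qed.
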